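(* Let $n\ge 1$ and $s\in\{1,\dots,n\}$ be integers and let $C\in\mathbb{R}^{n\times n}$ be symmetric positive definite. Define $z^*=\max\{\log\det(C_{S,S}) : S\subseteq\{1,\dots,n\},\ |S|=s\}$. Then for every $t$ with $0\le t\le\lambda_{\min}(C)$, $$z^*=\max\Big\{\Phi_s\big(M_t(x);t\big) : x\in\{0,1\}^n,\ \textstyle\sum_{i=1}^n x_i=s\Big\}.$$
   Context: $\log$ is the natural logarithm, $C_{S,S}$ is the principal submatrix of $C$ with rows and columns indexed by $S$, and $\lambda_{\min}(C)$ is the smallest eigenvalue of $C$. For $0\le t\le\lambda_{\min}(C)$ the matrix $C-tI$ is positive semidefinite; let $A(t)\in\mathbb{R}^{n\times n}$ be a Cholesky factor of it, i.e. $C-tI=A(t)^\top A(t)$, and let $a_i(t)\in\mathbb{R}^n$ be the $i$-th column of $A(t)$. For $x\in[0,1]^n$ put $M_t(x)=\sum_{i=1}^n x_i\,a_i(t)a_i(t)^\top$. For a symmetric matrix $X$, $\lambda_1(X)\ge\dots\ge\lambda_n(X)$ are its eigenvalues. For a positive semidefinite $X$ and $t\ge 0$, $\Phi_s(X;t)=\sum_{i=1}^s\log(\lambda_i(X)+t)$. *)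

From HB Require Import structures.
From mathcomp Require Import all_boot all_order all_algebra.
From mathcomp Require Import all_classical all_reals all_analysis.
Set Implicit Arguments. Unset Strict Implicit. Unset Printing Implicit Defensive.
Import Order.TTheory GRing.Theory Num.Theory.
Local Open Scope ring_scope.

Section Defs.
Variable R : realType.

Definition sym_pd n (C : 'M[R]_n) : Prop :=
  C^T = C /\ forall v : 'cV[R]_n, v != 0 -> 0 < (v^T *m C *m v) 0 0.

Definition sorted_eigs_of n (A : 'M[R]_n) (l : seq R) : bool :=
  sorted (fun x y => y <= x) l &&
  (char_poly A == \prod_(x <- l) ('X - x%:P)).

(* eigs A = [:: lambda_1(A); ...; lambda_n(A)], lambda_1 >= ... >= lambda_n
   (well defined for real symmetric matrices; [::] if char_poly does not split) *)
Definition eigs n (A : 'M[R]_n) : seq R :=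
  match pselect (exists l, sorted_eigs_of A l) with
  | left e => xchoose e
  | right _ => [::]
  end.

(* lambda_i(A), 1-based index i *)
Definition lambda n (A : 'M[R]_n) (i : nat) : R := nth 0 (eigs A) i.-1.

Definition lambda_min n (A : 'M[R]_n) : R := last 0 (eigs A).

(* principal submatrix C_{S,S} (indices of S in increasing order) *)
Definition princ_sub n (C : 'M[R]_n) (S : {set 'I_n}) : 'M[R]_#|S| :=
  \matrix_(i < #|S|, j < #|S|) C (enum_val i) (enum_val j).

Definition Mt n (A : 'M[R]_n) (x : 'I_n -> R) : 'M[R]_n :=
  \sum_(i < n) x i *: (col i A *m (col i A)^T).

Definition Phi n (s : nat) (X : 'M[R]_n) (t : R) : R :=
  \sum_(1 <= i < s.+1) ln (lambda X i + t).

End Defs.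

From HB Require Import structures.
From mathcomp Require Import all_boot all_order all_algebra.
From mathcomp Require Import all_classical all_reals all_analysis.
From mathcomp Require Import complex zify.
Import Order.TTheory GRing.Theory Num.Theory.
Set Implicit Arguments. Unset Strict Implicit. Unset Printing Implicit Defensive.
Local Open Scope ring_scope.

(* Both maxima are taken term by term over the same index set (a subset S is its
   indicator vector x), and the terms agree. Let B = A_{:,S} be the columns of A
   indexed by S. Then C_{S,S} = B^T B + t I and M_t(x) = B B^T. The characteristic
   polynomials satisfy char(B B^T) = X^(n-s) char(B^T B); since B^T B is symmetric
   positive semidefinite, its characteristic polynomial splits with nonnegative roots, so
   the s largest eigenvalues of B B^T are exactly the eigenvalues of B^T B. Hence
   log det C_{S,S} = sum_i log(lambda_i(B^T B) + t) = Phi_s(M_t(x); t), the logarithms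
   being additive because C_{S,S} is positive definite. *)

Lemma char_poly_conj (R : comUnitRingType) k (U D : 'M[R]_k) :
  U \in unitmx -> char_poly (invmx U *m D *m U) = char_poly D.
Proof.
move=> Uu; rewrite /char_poly /char_poly_mx.
have -> : 'X%:M - map_mx polyC (invmx U *m D *m U) =
    map_mx polyC (invmx U) *m ('X%:M - map_mx polyC D) *m map_mx polyC U.
  rewrite !map_mxM mulmxBr mulmxBl; congr (_ - _).
  by rewrite mul_mx_scalar -scalemxAl -map_mxM mulVmx // map_mx1 scalemx1.
rewrite !det_mulmx mulrC mulrA -!det_mulmx -map_mxM mulmxV //.
by rewrite map_scalar_mx rmorph1 mul1mx.
Qed.

Lemma horner_char_poly (R : comNzRingType) k (Q : 'M[R]_k) a :
  (char_poly Q).[a] = \det (a%:M - Q).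
Proof.
rewrite /char_poly -horner_evalE -det_map_mx; congr (\det _).
apply/matrixP => i j; rewrite !mxE /= horner_evalE.
by rewrite hornerD hornerN hornerC hornerMn hornerX.
Qed.

Lemma det_add_scalar (R : comNzRingType) k (Q : 'M[R]_k) (d : seq R) t :
  char_poly Q = \prod_(x <- d) ('X - x%:P) -> \det (Q + t%:M) = \prod_(x <- d) (x + t).
Proof.
move=> cpQ; have size_d : size d = k.
  by have := size_char_poly Q; rewrite cpQ size_prod_XsubC => -[].
have := horner_char_poly Q (- t); rewrite cpQ horner_prod.
under eq_bigr => x _ do rewrite hornerXsubC -opprD addrC.
have -> : (- t)%:M - Q = - (Q + t%:M) by rewrite raddfN opprD addrC.
rewrite -scaleN1r detZ (big_nth 0) big_mkord prodrN card_ord size_d.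
by move/lreg_sign <-; rewrite (big_nth 0) big_mkord size_d.
Qed.

Lemma sym_char_poly_split (R : rcfType) k (Q : 'M[R]_k) : Q^T = Q ->
  exists d : seq R, char_poly Q = \prod_(x <- d) ('X - x%:P).
Proof.
move=> Qsym; pose Qc := map_mx (real_complex R) Q.
have Qc_herm : Qc \is hermsymmx.
  rewrite qualifE /=; apply/eqP/matrixP => i j; rewrite !mxE /= expr0 mul1r.
  rewrite -[Q i j](congr1 (fun M : 'M[R]_k => M i j) Qsym) mxE.
  by apply/eqP; rewrite eq_complex /= oppr0 !eqxx.
have sp_real := hermitian_spectral_diag_real Qc_herm.
move/hermitian_normalmx/orthomx_spectralP: Qc_herm.
set P := spectralmx Qc; set sp := spectral_diag Qc => QcE.
have cpQc : char_poly Qc = \prod_(i < k) ('X - (sp 0 i)%:P).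
  rewrite QcE char_poly_conj ?spectral_unit // char_poly_trig ?diag_mx_is_trig //.
  by apply: eq_bigr => i _; rewrite mxE eqxx mulr1n.
exists [seq complex.Re (sp 0 i) | i <- enum 'I_k].
apply: (@map_poly_inj _ _ (real_complex R)).
rewrite map_char_poly -/Qc cpQc map_prod_XsubC big_map big_enum /=.
apply: eq_bigr => i _; congr ('X - _%:P).
by rewrite RRe_real //; apply: (mxOverP sp_real).
Qed.

Lemma char_poly_mulmxC (R : idomainType) n k (B : 'M[R]_(n, k)) (C : 'M[R]_(k, n)) :
  (k <= n)%N -> char_poly (B *m C) = 'X^(n - k) * char_poly (C *m B).
Proof.
move=> le_kn; pose Bp := map_mx polyC B; pose Cp := map_mx polyC C.
have cpBC : char_poly (B *m C) = \det ('X%:M - Bp *m Cp).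
  by rewrite /char_poly /char_poly_mx map_mxM.
have cpCB : char_poly (C *m B) = \det ('X%:M - Cp *m Bp).
  by rewrite /char_poly /char_poly_mx map_mxM.
pose L := block_mx ('X%:M : 'M[{poly R}]_n) Bp Cp 1%:M.
have detL : \det L = char_poly (B *m C).
  have -> : L = block_mx 1%:M Bp 0 1%:M *m block_mx ('X%:M - Bp *m Cp) 0 Cp 1%:M.
    by rewrite mulmx_block ?(mul1mx, mul0mx, mulmx0, mulmx1, add0r) subrK.
  by rewrite det_mulmx det_ublock det_lblock !det1 !mulr1 mul1r cpBC.
pose K := block_mx ('X%:M : 'M[{poly R}]_n) 0 (- Cp) ('X%:M : 'M[{poly R}]_k).
have detKL : \det (K *m L) = ('X * 'X) ^+ n * char_poly (C *m B).
  have -> : K *m L = block_mx ('X * 'X)%:M ('X *: Bp) 0 ('X%:M - Cp *m Bp).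
    rewrite mulmx_block !mul0mx !addr0 mulmx1 -scalar_mxM.
    congr block_mx; first exact: mul_scalar_mx.
      by rewrite mulNmx mul_mx_scalar mul_scalar_mx addNr.
    by rewrite mulNmx addrC.
  by rewrite det_ublock det_scalar cpCB.
move: detKL; rewrite det_mulmx det_lblock !det_scalar detL -expr2 -exprM.
have -> : (2 * n = (n + k) + (n - k))%N by lia.
rewrite -exprD [in RHS]exprD -mulrA => /mulfI; apply.
by rewrite expf_neq0 // polyX_eq0.
Qed.

Section RealSpectrum.
Variable R : realType.

Lemma mulmx_tr_ge0 k (v : 'rV[R]_k) : 0 <= (v *m v^T) 0 0.
Proof. by rewrite mxE; apply: sumr_ge0 => i _; rewrite mxE -expr2 sqr_ge0. Qed.

Lemma mulmx_tr_gt0 k (v : 'rV[R]_k) : v != 0 -> 0 < (v *m v^T) 0 0.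
Proof.
move=> v_neq0; rewrite lt_def mulmx_tr_ge0 andbT; apply: contra v_neq0.
rewrite mxE psumr_eq0 => [/allP v0|i _]; last by rewrite mxE -expr2 sqr_ge0.
apply/eqP/rowP => i; rewrite mxE.
by have /implyP/(_ isT) := v0 i (mem_index_enum i); rewrite mxE mulf_eq0 orbb => /eqP.
Qed.

Lemma eigenvalue_quadform k (M : 'M[R]_k) a : eigenvalue M a ->
  exists2 v : 'rV_k, (v *m M *m v^T) 0 0 = a * (v *m v^T) 0 0 & v != 0.
Proof.
by move/eigenvalueP => [v vM v_neq0]; exists v; rewrite // vM -scalemxAl mxE.
Qed.

Lemma gram_eigenvalue_ge0 n k (B : 'M[R]_(n, k)) a :
  eigenvalue (B^T *m B) a -> 0 <= a.
Proof.
move/eigenvalue_quadform => [v vBBv v_neq0].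
have := mulmx_tr_ge0 (v *m B^T).
rewrite trmx_mul trmxK !mulmxA -[v *m _ *m B](mulmxA v) vBBv.
by rewrite pmulr_lge0 // mulmx_tr_gt0.
Qed.

Lemma sym_pd_eigenvalue_gt0 k (M : 'M[R]_k) a : sym_pd M -> eigenvalue M a -> 0 < a.
Proof.
move=> [_ M_pd] /eigenvalue_quadform [v vMv v_neq0].
have := M_pd v^T; rewrite trmxK vMv trmx_eq0 => /(_ v_neq0).
by rewrite pmulr_lgt0 // mulmx_tr_gt0.
Qed.

Lemma sorted_ge_cat_nseq0 (s : seq R) m : sorted >=%R s -> all (<=%R 0) s ->
  sorted >=%R (s ++ nseq m 0).
Proof.
rewrite !(sorted_pairwise ge_trans) pairwise_cat => -> /allP s_ge0 /=.
apply/andP; split; first by apply/allrelP => x y /s_ge0 x_ge0 /nseqP [-> _].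
by elim: m => //= m ->; rewrite andbT; apply/allP => y /nseqP [-> _] /=.
Qed.

Lemma eigsE n (M : 'M[R]_n) l : sorted_eigs_of M l -> eigs M = l.
Proof.
move=> l_eigs; rewrite /eigs; case: pselect => [ex|[]]; last by exists l.
move: l_eigs (xchooseP ex) => /andP [l_sorted /eqP cpM] /andP [l'_sorted /eqP cpM'].
apply: (sorted_eq ge_trans ge_anti) => //.
by apply: prod_XsubC_eq; rewrite -cpM -cpM'.
Qed.

Lemma eigs_mulmx_tr n k (B : 'M[R]_(n, k)) (d : seq R) : (k <= n)%N ->
  char_poly (B^T *m B) = \prod_(x <- d) ('X - x%:P) ->
  eigs (B *m B^T) = sort >=%R d ++ nseq (n - k) 0.
Proof.
move=> le_kn cpBB; apply: eigsE; apply/andP; split.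
  apply: (sorted_ge_cat_nseq0 (n - k) (sort_sorted ge_total d)).
  apply/allP => x; rewrite mem_sort => xd; apply: (gram_eigenvalue_ge0 (B := B)).
  by rewrite eigenvalue_root_char cpBB root_prod_XsubC.
apply/eqP; rewrite char_poly_mulmxC // cpBB big_cat /= mulrC.
by rewrite (perm_big _ (permEl (perm_sort _ d))) big_nseq subr0 iter_mulr_1.
Qed.

Lemma ln_prod (I : eqType) (r : seq I) (F : I -> R) : {in r, forall i, 0 < F i} ->
  ln (\prod_(i <- r) F i) = \sum_(i <- r) ln (F i).
Proof.
elim: r => [|i r IHr] F_gt0; first by rewrite !big_nil ln1.
have F_gt0r : {in r, forall j, 0 < F j} by move=> j jr; rewrite F_gt0 // inE jr orbT.
rewrite !big_cons lnM ?posrE ?IHr ?F_gt0 ?mem_head //.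
by rewrite big_seq prodr_gt0.
Qed.

Lemma ln_det_gram_add_scalar n k (B : 'M[R]_(n, k)) t : (k <= n)%N ->
  sym_pd (B^T *m B + t%:M) -> ln (\det (B^T *m B + t%:M)) = Phi k (B *m B^T) t.
Proof.
move=> le_kn pd_Bt.
have [d cpBB] : exists d, char_poly (B^T *m B) = \prod_(x <- d) ('X - x%:P).
  by apply: sym_char_poly_split; rewrite trmx_mul trmxK.
have size_d : size d = k.
  by have := size_char_poly (B^T *m B); rewrite cpBB size_prod_XsubC => -[].
have shift_gt0 x : x \in d -> 0 < x + t.
  move=> xd; apply: (sym_pd_eigenvalue_gt0 pd_Bt); apply/eigenvalueP.
  have /eigenvalueP [v vBB v_neq0] : eigenvalue (B^T *m B) x.
    by rewrite eigenvalue_root_char cpBB root_prod_XsubC.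
  by exists v; rewrite // mulmxDr vBB mul_mx_scalar scalerDl.
rewrite (det_add_scalar t cpBB) ln_prod // /Phi /lambda (eigs_mulmx_tr le_kn cpBB).
rewrite big_add1 /= -(perm_big _ (permEl (perm_sort >=%R d))).
rewrite (big_nth 0) size_sort size_d.
by apply: eq_big_nat => i /andP [_ lt_ik]; rewrite nth_cat size_sort size_d lt_ik.
Qed.

End RealSpectrum.

Section PrincipalSubmatrix.
Variables (R : realType) (n : nat) (S : {set 'I_n}).

Definition sel_mx : 'M[R]_(n, #|S|) := colsub enum_val 1%:M.

Lemma sel_mx_tr_mul : sel_mx^T *m sel_mx = 1%:M.
Proof.
rewrite trmx_mxsub trmx1 -mxsub_mul mul1mx.
by apply/matrixP => i j; rewrite !mxE (inj_eq enum_val_inj).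
Qed.

Lemma Mt_indicator (A : 'M[R]_n) :
  Mt A (fun i => (i \in S)%:R) = A *m sel_mx *m (A *m sel_mx)^T.
Proof.
rewrite mulmx_colsub mulmx1; apply/matrixP => a b; rewrite summxE mxE.
under [RHS]eq_bigr => j _ do rewrite [_^T _ _]mxE !mxE.
rewrite -(big_enum_val (A := mem S) (fun i => A a i * A b i)) [RHS]big_mkcond /=.
apply: eq_bigr => i _; rewrite !mxE big_ord1 !mxE.
by case: (i \in S); rewrite ?mul1r ?mul0r.
Qed.

Lemma princ_subE (C : 'M[R]_n) : princ_sub C S = sel_mx^T *m C *m sel_mx.
Proof.
rewrite trmx_mxsub trmx1 mul_rowsub_mx mulmx_colsub mul1mx mulmx1.
by apply/matrixP => i j; rewrite !mxE.
Qed.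

Lemma sym_pd_princ_sub (C : 'M[R]_n) : sym_pd C -> sym_pd (princ_sub C S).
Proof.
move=> [C_sym C_pd]; rewrite princ_subE; split.
  by rewrite !trmx_mul trmxK C_sym mulmxA.
move=> v v_neq0; have := C_pd (sel_mx *m v); rewrite trmx_mul !mulmxA; apply.
by apply: contra v_neq0 => /eqP sv0; rewrite -[v]mul1mx -sel_mx_tr_mul -mulmxA sv0 mulmx0.
Qed.

Lemma ln_det_princ_sub (C A : 'M[R]_n) t : sym_pd C -> A^T *m A = C - t%:M ->
  ln (\det (princ_sub C S)) = Phi #|S| (Mt A (fun i => (i \in S)%:R)) t.
Proof.
move=> C_pd AtA.
have CSS : princ_sub C S = (A *m sel_mx)^T *m (A *m sel_mx) + t%:M.
  rewrite princ_subE -(subrK t%:M C) -AtA mulmxDr mulmxDl mul_mx_scalar -scalemxAl.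
  by rewrite sel_mx_tr_mul scalemx1 trmx_mul !mulmxA.
rewrite CSS Mt_indicator ln_det_gram_add_scalar -?CSS //; last exact: sym_pd_princ_sub.
by have := max_card (mem S); rewrite card_ord.
Qed.

End PrincipalSubmatrix.

Theorem proposition1 (R : realType) (n s : nat) (C : 'M[R]_n) :
  (1 <= n)%N -> (1 <= s <= n)%N -> sym_pd C ->
  forall (t : R) (A : 'M[R]_n),
    0 <= t -> t <= lambda_min C -> A^T *m A = C - t%:M ->
    \big[Order.max/-oo%E]_(S : {set 'I_n} | #|S| == s) (ln (\det (princ_sub C S)))%:E
    = \big[Order.max/-oo%E]_(x : {ffun 'I_n -> bool} | #|[set i | x i]| == s)
        (Phi s (Mt A (fun i => (x i)%:R)) t)%:E.
Proof.
(* The bounds on t only ensure that the factor A exists. *)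
move=> _ _ C_pd t A _ _ AtA.
rewrite (reindex (fun x : {ffun 'I_n -> bool} => [set i | x i])) /=; last first.
  exists (fun S : {set 'I_n} => [ffun i => i \in S]) => [x _|S _].
    by apply/ffunP => i; rewrite ffunE inE.
  by apply/setP => i; rewrite inE ffunE.
apply: eq_bigr => x /eqP <-; rewrite (ln_det_princ_sub _ C_pd AtA).
have -> // : (fun i => (i \in [set i | x i])%:R) = (fun i => (x i)%:R :> R).
by apply: boolp.funext => i; rewrite inE.
Qed.
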